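(* For any small category $\mathcal C$ and endofunctor $T:\mathcal C\to\mathcal C$, the simplicial groupoid $\mathcal NC^T_\bullet(\mathcal C)$ is unital $2$-Segal.
   Context: For simplicial groupoids, $X_I:=X_k$ for ordered $I$ with $|I|=k+1$; $\times^R$ = $2$-pullback; weak equivalence = equivalence of groupoids. $X_\bullet$ is $2$-Segal if for every $n\ge3$, $0\le i<j\le n$, $X_n\to X_{\{i,\dots,j\}}\times^R_{X_{\{i,j\}}}X_{\{0,\dots,i,j,\dots,n\}}$ is an equivalence; unital $2$-Segal if moreover for $n\ge2$, $0\le i\le n-1$, $\partial_{\{i\}}\times s_i:X_{n-1}\to X_{\{i\}}\times^R_{X_{\{i,i+1\}}}X_n$ is an equivalence ($\partial_{\{i\}}$ restriction to vertex $i$, $X_{\{i\}}\to X_{\{i,i+1\}}$ the degeneracy $s_0$). $\mathcal NC^T_n(\mathcal C)$ is the groupoid of diagrams $x_0\xrightarrow{f_0}x_1\xrightarrow{f_1}\cdots\xrightarrow{f_{n-1}}x_n\xrightarrow{f_n}T(x_0)$ in $\mathcal C$, morphisms being families of isomorphisms $x_i\to y_i$, $0\le i\le n$, making all squares commute (the last square using $T$ of the $0$th isomorphism). For $1\le i\le n$, $\partial_i$ omits $x_i$ and composes $f_i\circ f_{i-1}$; $\partial_0$ gives $x_1\to\dots\to x_n\xrightarrow{T(f_0)\circ f_n}T(x_1)$; degeneracies insert identities. *)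

From mathcomp Require Import all_boot zify.
From Stdlib Require Import ProofIrrelevance FunctionalExtensionality.

Set Implicit Arguments.
Unset Strict Implicit.
Unset Printing Implicit Defensive.

Record Category := Cat {
  ob :> Type;
  hom : ob -> ob -> Type;
  idm : forall a, hom a a;
  compm : forall a b c, hom b c -> hom a b -> hom a c;
  comp1m : forall a b (f : hom a b), compm (idm b) f = f;
  compm1 : forall a b (f : hom a b), compm f (idm a) = f;
  compA : forall a b c d (f : hom a b) (g : hom b c) (h : hom c d),
    compm h (compm g f) = compm (compm h g) f }.

Definition is_iso (C : Category) (a b : C) (f : hom a b) : Prop :=
  exists g : hom b a, compm g f = idm a /\ compm f g = idm b.

Record Functor (A B : Category) := Fun {
  fob :> A -> B;
  fmap : forall a b : A, hom a b -> hom (fob a) (fob b);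
  fmap_id : forall a : A, fmap (idm a) = idm (fob a);
  fmap_comp : forall (a b c : A) (f : hom a b) (g : hom b c),
    fmap (compm g f) = compm (fmap g) (fmap f) }.

Definition is_equivalence (A B : Category) (F : Functor A B) : Prop :=
  exists (G : Functor B A) (eta : forall a : A, hom a (G (F a)))
         (eps : forall b : B, hom (F (G b)) b),
    [/\ (forall a, is_iso (eta a)),
        (forall b, is_iso (eps b)),
        (forall (a a' : A) (f : hom a a'),
            compm (eta a') f = compm (fmap G (fmap F f)) (eta a)) &
        (forall (b b' : B) (g : hom b b'),
            compm g (eps b) = compm (eps b') (fmap F (fmap G g)))].

Lemma iso_id (C : Category) (a : C) : is_iso (idm a).
Proof. by exists (idm a); rewrite comp1m. Qed.

Lemma iso_comp (C : Category) (a b c : C) (f : hom a b) (g : hom b c) :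
  is_iso f -> is_iso g -> is_iso (compm g f).
Proof.
move=> [f' [f1 f2]] [g' [g1 g2]]; exists (compm f' g'); split.
- by rewrite compA -(compA g) g1 compm1.
- by rewrite compA -(compA f') f2 compm1.
Qed.

Section Pullback.
Variables (A B C : Category) (F : Functor A B) (G : Functor C B).

Record pb_ob := PbOb {
  pb_a : A; pb_c : C; pb_phi : hom (F pb_a) (G pb_c); pb_phi_iso : is_iso pb_phi }.

Record pb_hom (x y : pb_ob) := PbHom {
  pb_u : hom (pb_a x) (pb_a y);
  pb_v : hom (pb_c x) (pb_c y);
  pb_sq : compm (fmap G pb_v) (pb_phi x) = compm (pb_phi y) (fmap F pb_u) }.

Lemma pb_hom_ext x y (f g : pb_hom x y) :
  pb_u f = pb_u g -> pb_v f = pb_v g -> f = g.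
Proof.
case: f g => u v s [u' v' s'] /= eu ev; subst; f_equal; exact: proof_irrelevance.
Qed.

Definition pb_id_hom (x : pb_ob) : pb_hom x x.
Proof. refine (@PbHom x x (idm _) (idm _) _); by rewrite !fmap_id comp1m compm1. Defined.

Definition pb_comp_hom (x y z : pb_ob) (g : pb_hom y z) (f : pb_hom x y) : pb_hom x z.
Proof.
refine (@PbHom x z (compm (pb_u g) (pb_u f)) (compm (pb_v g) (pb_v f)) _).
by rewrite !fmap_comp -compA (pb_sq f) compA (pb_sq g) -compA.
Defined.

Definition Pullback : Category.
Proof.
refine (@Cat pb_ob pb_hom pb_id_hom pb_comp_hom _ _ _).
- by move=> a b f; apply: pb_hom_ext; rewrite /= comp1m.
- by move=> a b f; apply: pb_hom_ext; rewrite /= compm1.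
- by move=> a b c d f g h; apply: pb_hom_ext; rewrite /= compA.
Defined.

Section PbPair.
Variables (X : Category) (P : Functor X A) (Q : Functor X C)
  (th : forall x : X, hom (F (P x)) (G (Q x))).
Hypothesis th_iso : forall x, is_iso (th x).
Hypothesis th_nat : forall (x y : X) (f : hom x y),
  compm (fmap G (fmap Q f)) (th x) = compm (th y) (fmap F (fmap P f)).

Definition pb_pair_ob (x : X) : Pullback := PbOb (th_iso x).
Definition pb_pair_hom (x y : X) (f : hom x y) :
  @hom Pullback (pb_pair_ob x) (pb_pair_ob y) :=
  @PbHom (pb_pair_ob x) (pb_pair_ob y) (fmap P f) (fmap Q f) (th_nat f).

Definition pb_pair : Functor X Pullback.
Proof.
refine (@Fun X Pullback pb_pair_ob pb_pair_hom _ _).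
- by move=> a; apply: pb_hom_ext; rewrite /= !fmap_id.
- by move=> a b c f g; apply: pb_hom_ext; rewrite /= !fmap_comp.
Defined.
End PbPair.
End Pullback.

Definition mono_ord (k n : nat) (f : 'I_k.+1 -> 'I_n.+1) : Prop :=
  forall a b : 'I_k.+1, a <= b -> f a <= f b.

Section NC.
Variables (C : Category) (T : Functor C C).

(* An object of NC^T_n(C): a diagram
      x_0 -> x_1 -> ... -> x_n -> T(x_0)
   recorded together with all its composites:
   vg i j : x_i -> x_j  (i <= j)   and   vh i j : x_j -> T(x_i)  (i <= j). *)
Record NCob (n : nat) := NCOb {
  vx : 'I_n.+1 -> C;
  vg : forall i j : 'I_n.+1, i <= j -> hom (vx i) (vx j);
  vh : forall i j : 'I_n.+1, i <= j -> hom (vx j) (T (vx i));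
  vg_id : forall (i : 'I_n.+1) (H : i <= i), vg H = idm (vx i);
  vg_comp : forall (i j k : 'I_n.+1) (Hij : i <= j) (Hjk : j <= k) (Hik : i <= k),
      compm (vg Hjk) (vg Hij) = vg Hik;
  vh_g : forall (i j k : 'I_n.+1) (Hij : i <= j) (Hjk : j <= k) (Hik : i <= k),
      compm (vh Hik) (vg Hjk) = vh Hij;
  vg_h : forall (i j k : 'I_n.+1) (Hij : i <= j) (Hjk : j <= k) (Hik : i <= k),
      compm (fmap T (vg Hij)) (vh Hik) = vh Hjk }.

Record NChom (n : nat) (A B : NCob n) := NCHom {
  hu : forall t : 'I_n.+1, hom (vx A t) (vx B t);
  hu_iso : forall t, is_iso (hu t);
  hu_g : forall (i j : 'I_n.+1) (H : i <= j),
      compm (hu j) (vg A H) = compm (vg B H) (hu i);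
  hu_h : forall (i j : 'I_n.+1) (H : i <= j),
      compm (fmap T (hu i)) (vh A H) = compm (vh B H) (hu j) }.

Lemma NChom_ext n (A B : NCob n) (f g : NChom A B) :
  (forall t, hu f t = hu g t) -> f = g.
Proof.
case: f g => u ui ug uh [v vi vg' vh'] /= e.
have ee : u = v by apply: functional_extensionality_dep.
subst; f_equal; exact: proof_irrelevance.
Qed.

Definition NC_id n (A : NCob n) : NChom A A.
Proof.
refine (@NCHom n A A (fun t => idm _) (fun t => iso_id _) _ _).
- by move=> i j H; rewrite comp1m compm1.
- by move=> i j H; rewrite fmap_id comp1m compm1.
Defined.

Definition NC_comp n (A B D : NCob n) (g : NChom B D) (f : NChom A B) : NChom A D.
Proof.
refine (@NCHom n A D (fun t => compm (hu g t) (hu f t))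
          (fun t => iso_comp (hu_iso f t) (hu_iso g t)) _ _).
- by move=> i j H; rewrite -compA (hu_g f) compA (hu_g g) -compA.
- by move=> i j H; rewrite fmap_comp -compA (hu_h f) compA (hu_h g) -compA.
Defined.

Definition NC (n : nat) : Category.
Proof.
refine (@Cat (NCob n) (@NChom n) (@NC_id n) (@NC_comp n) _ _ _).
- by move=> a b f; apply: NChom_ext => t /=; rewrite comp1m.
- by move=> a b f; apply: NChom_ext => t /=; rewrite compm1.
- by move=> a b c d f g h; apply: NChom_ext => t /=; rewrite compA.
Defined.

Section Restriction.
Variables (k n : nat) (al : 'I_k.+1 -> 'I_n.+1) (mal : mono_ord al).

Definition res_ob (A : NCob n) : NCob k.
Proof.
refine (@NCOb k (fun t => vx A (al t))
          (fun i j H => vg A (mal H)) (fun i j H => vh A (mal H)) _ _ _ _).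
- move=> i H; rewrite vg_id //.
- move=> i j l Hij Hjl Hil; exact: vg_comp.
- move=> i j l Hij Hjl Hil; exact: vh_g.
- move=> i j l Hij Hjl Hil; exact: vg_h.
Defined.

Definition res_hom (A B : NCob n) (f : NChom A B) : NChom (res_ob A) (res_ob B).
Proof.
refine (@NCHom k (res_ob A) (res_ob B) (fun t => hu f (al t))
          (fun t => hu_iso f (al t)) _ _).
- by move=> i j H; exact: (hu_g f (mal H)).
- by move=> i j H; exact: (hu_h f (mal H)).
Defined.

Definition res : Functor (NC n) (NC k).
Proof.
refine (@Fun (NC n) (NC k) res_ob res_hom _ _).
- by move=> a; apply: NChom_ext.
- by move=> a b c f g; apply: NChom_ext.
Defined.
End Restriction.

Definition eqhom n (x : 'I_n.+1 -> C) (a b : 'I_n.+1) (e : a = b) : hom (x a) (x b) :=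
  match e in _ = b' return hom (x a) (x b') with erefl => idm (x a) end.

Lemma eqhom_iso n (x : 'I_n.+1 -> C) a b (e : a = b) : is_iso (eqhom x e).
Proof. by case: b / e; exact: iso_id. Qed.

Lemma eqhom_vg n (A : NCob n) (a b a' b' : 'I_n.+1) (ea : a = a') (eb : b = b')
  (P : a <= b) (P' : a' <= b') :
  compm (eqhom (vx A) eb) (vg A P) = compm (vg A P') (eqhom (vx A) ea).
Proof.
case: a' / ea P'; case: b' / eb => P' /=.
by rewrite comp1m compm1 (bool_irrelevance P P').
Qed.

Lemma eqhom_vh n (A : NCob n) (a b a' b' : 'I_n.+1) (ea : a = a') (eb : b = b')
  (P : a <= b) (P' : a' <= b') :
  compm (fmap T (eqhom (vx A) ea)) (vh A P) = compm (vh A P') (eqhom (vx A) eb).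
Proof.
case: a' / ea P'; case: b' / eb => P' /=.
by rewrite fmap_id comp1m compm1 (bool_irrelevance P P').
Qed.

Lemma eqhom_nat n (A B : NCob n) (f : NChom A B) (a a' : 'I_n.+1) (e : a = a') :
  compm (hu f a') (eqhom (vx A) e) = compm (eqhom (vx B) e) (hu f a).
Proof. by case: a' / e => /=; rewrite comp1m compm1. Qed.

Section Square.
Variables (n k k' l : nat)
  (al : 'I_k.+1 -> 'I_n.+1) (mal : mono_ord al)
  (al' : 'I_k'.+1 -> 'I_n.+1) (mal' : mono_ord al')
  (ga : 'I_l.+1 -> 'I_k.+1) (mga : mono_ord ga)
  (ga' : 'I_l.+1 -> 'I_k'.+1) (mga' : mono_ord ga')
  (e : forall t, al (ga t) = al' (ga' t)).

Definition sq_theta (A : NCob n) :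
  @hom (NC l) (res mga (res mal A)) (res mga' (res mal' A)).
Proof.
refine (@NCHom l (res mga (res mal A)) (res mga' (res mal' A))
          (fun t => eqhom (vx A) (e t)) (fun t => eqhom_iso _ (e t)) _ _).
- by move=> i j H /=; exact: eqhom_vg.
- by move=> i j H /=; exact: eqhom_vh.
Defined.

Definition sq_theta_inv (A : NCob n) :
  @hom (NC l) (res mga' (res mal' A)) (res mga (res mal A)).
Proof.
refine (@NCHom l (res mga' (res mal' A)) (res mga (res mal A))
          (fun t => eqhom (vx A) (esym (e t)))
          (fun t => eqhom_iso (vx A) (esym (e t))) _ _).
- by move=> i j H /=; exact: eqhom_vg.
- by move=> i j H /=; exact: eqhom_vh.
Defined.

Lemma sq_theta_iso (A : NCob n) : is_iso (sq_theta A).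
Proof.
exists (sq_theta_inv A); split; apply: NChom_ext => t /=;
  by case: (al' (ga' t)) / (e t) => /=; rewrite comp1m.
Qed.

Lemma sq_theta_nat (A B : NC n) (f : hom A B) :
  compm (fmap (res mga') (fmap (res mal') f)) (sq_theta A) =
  compm (sq_theta B) (fmap (res mga) (fmap (res mal) f)).
Proof. by apply: NChom_ext => t /=; exact: eqhom_nat. Qed.

Definition sq_map : Functor (NC n) (Pullback (res mga) (res mga')) :=
  @pb_pair (NC k) (NC l) (NC k') (res mga) (res mga') (NC n) (res mal) (res mal')
    sq_theta sq_theta_iso sq_theta_nat.
End Square.
End NC.

Lemma inord_val (m x : nat) : x <= m -> nat_of_ord (@inord m x) = x.
Proof. by move=> h; rewrite inordK // ltnS. Qed.

Section SegalMaps.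
Variables (n i j : nat) (Hij : i < j) (Hjn : j <= n).

(* X_n -> X_{i,...,j}  (I = {i,...,j}, |I| = (j - i) + 1) *)
Definition alI : 'I_(j - i).+1 -> 'I_n.+1 := fun t => inord (i + t).
(* X_n -> X_{0,...,i,j,...,n}  (|J| = n - (j - i) + 2) *)
Definition alJ : 'I_(n - (j - i)).+2 -> 'I_n.+1 :=
  fun t => inord (if t <= i then nat_of_ord t else t + (j - i) - 1).
(* X_{i,...,j} -> X_{i,j} : the vertices i, j are in positions 0, j - i of I *)
Definition gaI : 'I_2 -> 'I_(j - i).+1 := fun t => inord (t * (j - i)).
(* X_{0,..,i,j,..,n} -> X_{i,j} : the vertices i, j are in positions i, i+1 of J *)
Definition gaJ : 'I_2 -> 'I_(n - (j - i)).+2 := fun t => inord (i + t).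

Lemma mono_alI : mono_ord alI.
Proof.
move=> a b ab; have := ltn_ord a; have := ltn_ord b; rewrite /alI => ha hb.
rewrite !inord_val; lia.
Qed.

Lemma mono_alJ : mono_ord alJ.
Proof.
move=> a b ab; have := ltn_ord a; have := ltn_ord b; rewrite /alJ => ha hb.
case: ifP => ai; case: ifP => bi; rewrite !inord_val; lia.
Qed.

Lemma mono_gaI : mono_ord gaI.
Proof.
move=> a b ab; have := ltn_ord a; have := ltn_ord b; rewrite /gaI => ha hb.
have Hl : forall t : 'I_2, t * (j - i) <= j - i.
  by case=> [[|[|t]]] //= _; rewrite ?mul0n ?mul1n.
rewrite !inord_val ?Hl //; exact: leq_mul.
Qed.

Lemma mono_gaJ : mono_ord gaJ.
Proof.
move=> a b ab; have := ltn_ord a; have := ltn_ord b; rewrite /gaJ => ha hb.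
rewrite !inord_val; lia.
Qed.

Lemma segal_sq_eq : forall t : 'I_2, alI (gaI t) = alJ (gaJ t).
Proof.
case=> [[|[|t]]] // ht; apply: val_inj; rewrite /alI /alJ /gaI /gaJ /=.
- rewrite mul0n.
  have -> : nat_of_ord (@inord (j - i) 0) = 0 by rewrite inord_val.
  have -> : nat_of_ord (@inord (n - (j - i)).+1 (i + 0)) = i
    by rewrite inord_val; lia.
  by rewrite leqnn addn0.
- rewrite mul1n.
  have -> : nat_of_ord (@inord (j - i) (j - i)) = j - i by rewrite inord_val.
  have -> : nat_of_ord (@inord (n - (j - i)).+1 (i + 1)) = i + 1
    by rewrite inord_val; lia.
  have -> : (i + 1 <= i) = false by lia.
  congr (nat_of_ord (inord _)); lia.
Qed.

(* the comparison functor  X_n -> X_{i..j}  x^R_{X_{i,j}}  X_{0..i,j..n} *)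
Definition segal_map (C : Category) (T : Functor C C) :=
  @sq_map C T n (j - i) (n - (j - i)).+1 1 alI mono_alI alJ mono_alJ
    gaI mono_gaI gaJ mono_gaJ segal_sq_eq.
End SegalMaps.

Section UnitMaps.
Variables (m i : nat) (Him : i <= m).
(* here n = m + 1 in the paper's notation; i ranges over 0 <= i <= n - 1 *)

Definition alV : 'I_1 -> 'I_m.+1 := fun _ => inord i.
(* s_i : X_{n-1} -> X_n, along sigma_i : [n] -> [n-1] (hitting i twice) *)
Definition alS : 'I_m.+2 -> 'I_m.+1 :=
  fun t => inord (if t <= i then nat_of_ord t else t.-1).
(* s_0 : X_{\{i\}} -> X_{\{i,i+1\}} *)
Definition gaV : 'I_2 -> 'I_1 := fun _ => ord0.
Definition gaS : 'I_2 -> 'I_m.+2 := fun t => inord (i + t).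

Lemma mono_alV : mono_ord alV.
Proof. by move=> a b _; rewrite /alV. Qed.

Lemma mono_alS : mono_ord alS.
Proof.
move=> a b ab; have := ltn_ord a; have := ltn_ord b; rewrite /alS => ha hb.
case: ifP => ai; case: ifP => bi; rewrite !inord_val; lia.
Qed.

Lemma mono_gaV : mono_ord gaV.
Proof. by []. Qed.

Lemma mono_gaS : mono_ord gaS.
Proof.
move=> a b ab; have := ltn_ord a; have := ltn_ord b; rewrite /gaS => ha hb.
rewrite !inord_val; lia.
Qed.

Lemma unit_sq_eq : forall t : 'I_2, alV (gaV t) = alS (gaS t).
Proof.
case=> [[|[|t]]] // ht; apply: val_inj; rewrite /alV /alS /gaV /gaS /=.
- by rewrite !inord_val ?addn0 ?leqnn //; lia.
- rewrite !inord_val ?addn1 ?ltnn //; lia.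
Qed.

(* the comparison functor  X_{n-1} -> X_{\{i\}} x^R_{X_{\{i,i+1\}}} X_n,
   i.e.  d_{\{i\}} x s_i *)
Definition unit_map (C : Category) (T : Functor C C) :=
  @sq_map C T m 0 m.+1 1 alV mono_alV alS mono_alS gaV mono_gaV gaS mono_gaS
    unit_sq_eq.
End UnitMaps.

Definition NC_is_2Segal (C : Category) (T : Functor C C) : Prop :=
  forall (n i j : nat) (Hn : 3 <= n) (Hij : i < j) (Hjn : j <= n),
    is_equivalence (segal_map Hij Hjn T).

Definition NC_is_unital_2Segal (C : Category) (T : Functor C C) : Prop :=
  @NC_is_2Segal C T /\
  forall (m i : nat) (Hm : 1 <= m) (Him : i <= m),
    is_equivalence (unit_map Him T).
Arguments NC_is_2Segal : clear implicits.
Arguments NC_is_unital_2Segal : clear implicits.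

(* Every morphism of NC^T_n(C), and hence of the 2-pullbacks, is invertible, so
   for both conditions it suffices to build a quasi-inverse functor together
   with natural transformations to and from the identities.
   An object of the 2-Segal pullback is a pair of diagrams A on {i,...,j} and B
   on {0,...,i,j,...,n} identified along the edge {i,j}.  Interleaving the
   vertices of A and B gives a preorder on which A, B and the identification
   assemble into one diagram; restricting it to [n], taking each vertex from I
   or from J, yields the quasi-inverse.  For the unit condition, an object is
   B in X_n whose edge i -> i+1 is isomorphic to a degenerate edge, hence
   invertible, so B is recovered up to isomorphism from its face d_{i+1} B. *)

From mathcomp Require Import all_boot zify.
From Stdlib Require Import ProofIrrelevance IndefiniteDescription.

Set Implicit Arguments.
Unset Strict Implicit.
Unset Printing Implicit Defensive.

Section Inverses.
Variable K : Category.

Definition iso_inv (a b : K) (f : hom a b) (H : is_iso f) : hom b a :=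
  proj1_sig (constructive_indefinite_description _ H).

Lemma iso_invL (a b : K) (f : hom a b) (H : is_iso f) : compm (iso_inv H) f = idm a.
Proof. by rewrite /iso_inv; case: constructive_indefinite_description => g []. Qed.

Lemma iso_invR (a b : K) (f : hom a b) (H : is_iso f) : compm f (iso_inv H) = idm b.
Proof. by rewrite /iso_inv; case: constructive_indefinite_description => g []. Qed.

Lemma iso_inv_iso (a b : K) (f : hom a b) (H : is_iso f) : is_iso (iso_inv H).
Proof. by exists f; rewrite iso_invL iso_invR. Qed.

Lemma iso_inv_unique (a b : K) (f : hom a b) (g : hom b a) (H : is_iso f) :
  compm f g = idm b -> iso_inv H = g.
Proof.
move=> fg; transitivity (compm (iso_inv H) (compm f g)); first by rewrite fg compm1.
by rewrite compA iso_invL comp1m.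
Qed.

Lemma inverse_square (a b a' b' : K) (p : hom a b) (q : hom b a)
    (p' : hom a' b') (q' : hom b' a') (u : hom a a') (v : hom b b') :
  compm p q = idm b -> compm q' p' = idm a' ->
  compm v p = compm p' u -> compm u q = compm q' v.
Proof.
move=> pq qp' sq; transitivity (compm (compm q' p') (compm u q)).
  by rewrite qp' comp1m.
by rewrite -compA (compA _ _ p') -sq -compA pq compm1.
Qed.
End Inverses.

Lemma pb_hom_iso (A B C : Category) (F : Functor A B) (G : Functor C B)
    (x y : Pullback F G) (f : hom x y) :
  is_iso (pb_u f) -> is_iso (pb_v f) -> is_iso f.
Proof.
move=> Hu Hv.
have sq : compm (fmap G (iso_inv Hv)) (pb_phi y) = compm (pb_phi x) (fmap F (iso_inv Hu)).
  transitivity (compm (compm (fmap G (iso_inv Hv))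
                  (compm (pb_phi y) (fmap F (pb_u f)))) (fmap F (iso_inv Hu))).
    by rewrite -!compA -fmap_comp iso_invR fmap_id compm1.
  by rewrite -(pb_sq f) !compA -fmap_comp iso_invL fmap_id comp1m.
by exists (PbHom sq); split; apply: pb_hom_ext; rewrite /= ?iso_invL ?iso_invR.
Qed.

Ltac by_bool_irrelevance := solve [repeat f_equal; apply: bool_irrelevance].

Section NCGroupoid.
Variables (C : Category) (T : Functor C C).

Lemma vg_irrelevance n (A : NCob T n) (i j : 'I_n.+1) (H H' : i <= j) : vg A H = vg A H'.
Proof. by rewrite (bool_irrelevance H H'). Qed.

Lemma vh_irrelevance n (A : NCob T n) (i j : 'I_n.+1) (H H' : i <= j) : vh A H = vh A H'.
Proof. by rewrite (bool_irrelevance H H'). Qed.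

Lemma vg_trans n (A : NCob T n) (x y z : 'I_n.+1) (H1 : x <= y) (H2 : y <= z) :
  compm (vg A H2) (vg A H1) = vg A (leq_trans H1 H2).
Proof. exact: vg_comp. Qed.

Lemma vg_iso n (A : NCob T n) (i j : 'I_n.+1) (H : i <= j) :
  nat_of_ord i = nat_of_ord j -> is_iso (vg A H).
Proof. by move/val_inj=> E; subst j; rewrite vg_id; exact: iso_id. Qed.

Definition NC_hom_inv n (A B : NCob T n) (f : NChom A B) : NChom B A.
Proof.
refine (@NCHom C T n B A (fun t => iso_inv (hu_iso f t))
          (fun t => iso_inv_iso (hu_iso f t)) _ _).
- move=> i j H.
  transitivity (compm (compm (iso_inv (hu_iso f j)) (compm (vg B H) (hu f i)))
                      (iso_inv (hu_iso f i))).
    by rewrite -!compA iso_invR compm1.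
  by rewrite -(hu_g f H) !compA iso_invL comp1m.
- move=> i j H.
  transitivity (compm (compm (fmap T (iso_inv (hu_iso f i)))
                      (compm (vh B H) (hu f j))) (iso_inv (hu_iso f j))).
    by rewrite -!compA iso_invR compm1.
  by rewrite -(hu_h f H) !compA -fmap_comp iso_invL fmap_id comp1m.
Defined.

Lemma NC_hom_iso n (A B : NC T n) (f : hom A B) : is_iso f.
Proof.
by exists (NC_hom_inv f); split; apply: NChom_ext => t /=; rewrite ?iso_invL ?iso_invR.
Qed.

Lemma pb_NC_hom_iso k k' l (al : 'I_l.+1 -> 'I_k.+1) (mal : mono_ord al)
    (al' : 'I_l.+1 -> 'I_k'.+1) (mal' : mono_ord al')
    (x y : Pullback (res T mal) (res T mal')) (f : hom x y) : is_iso f.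
Proof. by apply: pb_hom_iso; exact: NC_hom_iso. Qed.

Lemma eqhom_vgE n (A : NCob T n) (s a b : 'I_n.+1) (e : a = b) (H : s <= a) (H' : s <= b) :
  compm (eqhom (vx A) e) (vg A H) = vg A H'.
Proof. by case: b / e H' => H' /=; rewrite comp1m (bool_irrelevance H H'). Qed.

Lemma eqhom_vhE n (A : NCob T n) (a a' b : 'I_n.+1) (e : a = a') (H : a <= b) (H' : a' <= b) :
  compm (fmap T (eqhom (vx A) e)) (vh A H) = vh A H'.
Proof. by case: a' / e H' => H'; rewrite /= fmap_id comp1m (bool_irrelevance H H'). Qed.

Lemma eqhomK n (x : 'I_n.+1 -> C) (a b : 'I_n.+1) (e : a = b) :
  compm (eqhom x e) (eqhom x (esym e)) = idm _.
Proof. by case: b / e; rewrite /= comp1m. Qed.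
End NCGroupoid.

Section Diagrams.
Variables (C : Category) (T : Functor C C) (R : Type) (le : R -> R -> bool).

Record diag := Diag {
  dob : R -> C;
  dg : forall r r', le r r' -> hom (dob r) (dob r');
  dh : forall r r', le r r' -> hom (dob r') (T (dob r));
  dg_id : forall r (H : le r r), dg H = idm (dob r);
  dg_comp : forall r1 r2 r3 (H12 : le r1 r2) (H23 : le r2 r3) (H13 : le r1 r3),
     compm (dg H23) (dg H12) = dg H13;
  dh_g : forall r1 r2 r3 (H12 : le r1 r2) (H23 : le r2 r3) (H13 : le r1 r3),
     compm (dh H13) (dg H23) = dh H12;
  dg_h : forall r1 r2 r3 (H12 : le r1 r2) (H23 : le r2 r3) (H13 : le r1 r3),
     compm (fmap T (dg H12)) (dh H13) = dh H23 }.

Hypothesis le_trans : forall r1 r2 r3, le r1 r2 -> le r2 r3 -> le r1 r3.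

Lemma dg_square (D : diag) r1 r2 s1 s2 (H1 : le r1 r2) (H2 : le s1 s2)
    (K1 : le r1 s1) (K2 : le r2 s2) :
  compm (dg D K2) (dg D H1) = compm (dg D H2) (dg D K1).
Proof. by rewrite !(dg_comp D _ _ (le_trans H1 K2)). Qed.

Lemma dh_square (D : diag) r1 r2 s1 s2 (H1 : le r1 r2) (H2 : le s1 s2)
    (K1 : le r1 s1) (K2 : le r2 s2) :
  compm (fmap T (dg D K1)) (dh D H1) = compm (dh D H2) (dg D K2).
Proof. by rewrite -(dh_g D H1 K2 (le_trans H1 K2)) compA (dg_h D K1 H2). Qed.

Variables (n : nat) (reg : 'I_n.+1 -> R)
  (mono_reg : forall s t : 'I_n.+1, s <= t -> le (reg s) (reg t)).

Definition diag_res (D : diag) : NCob T n.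
Proof.
refine (@NCOb C T n (fun t => dob D (reg t)) (fun s t H => dg D (mono_reg H))
          (fun s t H => dh D (mono_reg H)) _ _ _ _).
- by move=> *; exact: dg_id.
- by move=> *; exact: dg_comp.
- by move=> *; exact: dh_g.
- by move=> *; exact: dg_h.
Defined.

Definition diag_res_hom (D D' : diag) (m : forall r, hom (dob D r) (dob D' r))
  (m_iso : forall r, is_iso (m r))
  (m_g : forall r r' (H : le r r'), compm (m r') (dg D H) = compm (dg D' H) (m r))
  (m_h : forall r r' (H : le r r'),
     compm (fmap T (m r)) (dh D H) = compm (dh D' H) (m r')) :
  NChom (diag_res D) (diag_res D').
Proof.
refine (@NCHom C T n (diag_res D) (diag_res D') (fun t => m (reg t))
          (fun t => m_iso _) _ _).
- by move=> s t H; exact: m_g.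
- by move=> s t H; exact: m_h.
Defined.

Lemma diag_res_eqhom (D : diag) (s s' : 'I_n.+1) (e : s = s') r
    (K : le (reg s') r) (K' : le (reg s) r) :
  compm (dg D K) (eqhom (vx (diag_res D)) e) = dg D K'.
Proof. by case: s' / e K => K; rewrite compm1 (bool_irrelevance K K'). Qed.
End Diagrams.

(* The vertices of two simplices [dA] and [dB], glued along an edge: the
   B-vertices b <= i precede every A-vertex, the B-vertices b > i follow them.
   In the Segal situation [dA] is {i,...,j}, [dB] is {0,...,i,j,...,n}, and
   the edge is {i,j}, sitting at positions 0, dA of A and i, i+1 of B. *)
Inductive glue_index (dA dB : nat) := InA of 'I_dA.+1 | InB of 'I_dB.+1.
Arguments InA {dA dB}.
Arguments InB {dA dB}.

Definition glue_le (dA dB i : nat) (r r' : glue_index dA dB) : bool :=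
  match r, r' with
  | InA a, InA a' => a <= a'
  | InB b, InB b' => b <= b'
  | InB b, InA _ => b <= i
  | InA _, InB b => i < b
  end.

Lemma glue_le_trans dA dB i (r1 r2 r3 : glue_index dA dB) :
  glue_le i r1 r2 -> glue_le i r2 r3 -> glue_le i r1 r3.
Proof. by case: r1 r2 r3 => [a1|b1] [a2|b2] [a3|b3] /=; lia. Qed.

Section Gluing.
Variables (C : Category) (T : Functor C C) (dA dB i : nat)
  (ai aj : 'I_dA.+1) (bi bj : 'I_dB.+1).
Hypotheses (Hai : nat_of_ord ai = 0) (Haj : nat_of_ord aj = dA)
  (Hbi : nat_of_ord bi = i) (Hbj : nat_of_ord bj = i.+1).

Lemma ai_le (a : 'I_dA.+1) : ai <= a. Proof. by rewrite Hai. Qed.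
Lemma le_aj (a : 'I_dA.+1) : a <= aj. Proof. by rewrite Haj -ltnS ltn_ord. Qed.
Lemma le_bi (b : 'I_dB.+1) : b <= i -> b <= bi. Proof. by rewrite Hbi. Qed.
Lemma le_bj (b : 'I_dB.+1) : b <= i -> b <= bj. Proof. by rewrite Hbj; lia. Qed.
Lemma bi_le (b : 'I_dB.+1) : i < b -> bi <= b. Proof. by rewrite Hbi; lia. Qed.
Lemma bj_le (b : 'I_dB.+1) : i < b -> bj <= b. Proof. by rewrite Hbj. Qed.
Lemma ai_le_aj : ai <= aj. Proof. exact: ai_le. Qed.
Lemma bi_le_bj : bi <= bj. Proof. by rewrite Hbi Hbj. Qed.

Local Notation le := (@glue_le dA dB i).

Section Object.
Variables (A : NCob T dA) (B : NCob T dB)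
  (phi_i : hom (vx A ai) (vx B bi)) (psi_i : hom (vx B bi) (vx A ai))
  (phi_j : hom (vx A aj) (vx B bj)).
Hypotheses (phi_psi_i : compm phi_i psi_i = idm _) (psi_phi_i : compm psi_i phi_i = idm _)
  (phi_g : forall H : ai <= aj, compm phi_j (vg A H) = compm (vg B bi_le_bj) phi_i)
  (phi_h : compm (fmap T phi_i) (vh A ai_le_aj) = compm (vh B bi_le_bj) phi_j).

Definition glue_ob (r : glue_index dA dB) : C :=
  match r with InA a => vx A a | InB b => vx B b end.

Definition glue_g (r r' : glue_index dA dB) : le r r' -> hom (glue_ob r) (glue_ob r') :=
  match r, r' return le r r' -> hom (glue_ob r) (glue_ob r') with
  | InA a, InA a' => fun H => vg A H
  | InB b, InB b' => fun H => vg B H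
  | InB b, InA a => fun H => compm (vg A (ai_le a)) (compm psi_i (vg B (le_bi H)))
  | InA a, InB b => fun H => compm (vg B (bj_le H)) (compm phi_j (vg A (le_aj a)))
  end.

Definition glue_h (r r' : glue_index dA dB) : le r r' -> hom (glue_ob r') (T (glue_ob r)) :=
  match r, r' return le r r' -> hom (glue_ob r') (T (glue_ob r)) with
  | InA a, InA a' => fun H => vh A H
  | InB b, InB b' => fun H => vh B H
  | InB b, InA a => fun H => compm (vh B (le_bj H)) (compm phi_j (vg A (le_aj a)))
  | InA a, InB b => fun H =>
      compm (fmap T (vg A (ai_le a))) (compm (fmap T psi_i) (vh B (bi_le H)))
  end.

Lemma glue_g_id r (H : le r r) : glue_g H = idm (glue_ob r).
Proof. by case: r H => [a|b] H /=; rewrite vg_id. Qed.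

Lemma glue_g_comp r1 r2 r3 (H12 : le r1 r2) (H23 : le r2 r3) (H13 : le r1 r3) :
  compm (glue_g H23) (glue_g H12) = glue_g H13.
Proof.
case: r1 r2 r3 H12 H23 H13 => [a1|b1] [a2|b2] [a3|b3] /= H12 H23 H13.
- rewrite vg_trans; by_bool_irrelevance.
- rewrite -!compA vg_trans; by_bool_irrelevance.
- by exfalso; rewrite /glue_le /= in H12 H23; lia.
- rewrite !compA vg_trans; by_bool_irrelevance.
- rewrite !compA vg_trans; by_bool_irrelevance.
- rewrite -!compA (compA _ (vg A _) (vg A _)) vg_trans (compA _ _ phi_j) phi_g -!compA.
  rewrite (compA _ _ phi_i) phi_psi_i comp1m !compA !vg_trans; by_bool_irrelevance.
- rewrite -!compA vg_trans; by_bool_irrelevance.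
- rewrite vg_trans; by_bool_irrelevance.
Qed.

Lemma glue_h_g r1 r2 r3 (H12 : le r1 r2) (H23 : le r2 r3) (H13 : le r1 r3) :
  compm (glue_h H13) (glue_g H23) = glue_h H12.
Proof.
case: r1 r2 r3 H12 H23 H13 => [a1|b1] [a2|b2] [a3|b3] /= H12 H23 H13.
- exact: vh_g.
- rewrite -!compA (compA _ _ (vh B _)) (vh_g B bi_le_bj) (compA _ phi_j (vh B _)) -phi_h.
  rewrite -!compA (compA _ _ (fmap T psi_i)) -fmap_comp psi_phi_i fmap_id comp1m.
  rewrite (vh_g A (ai_le a2)) (vg_h A _ H12); by_bool_irrelevance.
- by exfalso; rewrite /glue_le /= in H12 H23; lia.
- rewrite -!compA (vh_g B (bi_le H12)); by_bool_irrelevance.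
- rewrite -!compA vg_trans; by_bool_irrelevance.
- rewrite compA (vh_g B (le_bj H12)); by_bool_irrelevance.
- rewrite -!compA (compA _ (vg A _) (vg A _)) vg_trans (compA _ _ phi_j) phi_g -!compA.
  rewrite (compA _ _ phi_i) phi_psi_i comp1m vg_trans (vh_g B H12); by_bool_irrelevance.
- exact: vh_g.
Qed.

Lemma glue_g_h r1 r2 r3 (H12 : le r1 r2) (H23 : le r2 r3) (H13 : le r1 r3) :
  compm (fmap T (glue_g H12)) (glue_h H13) = glue_h H23.
Proof.
case: r1 r2 r3 H12 H23 H13 => [a1|b1] [a2|b2] [a3|b3] /= H12 H23 H13.
- exact: vg_h.
- rewrite compA -fmap_comp vg_trans; by_bool_irrelevance.
- by exfalso; rewrite /glue_le /= in H12 H23; lia.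
- rewrite !fmap_comp -!compA (compA _ (fmap T (vg A _)) (fmap T (vg A _))).
  rewrite -fmap_comp vg_trans (compA _ _ (fmap T phi_j)) -fmap_comp phi_g fmap_comp.
  rewrite -!compA (compA _ _ (fmap T phi_i)) -fmap_comp phi_psi_i fmap_id comp1m.
  rewrite compA -fmap_comp vg_trans (vg_h B _ H23); by_bool_irrelevance.
- rewrite !fmap_comp -!compA (compA _ _ (fmap T (vg B _))) (vg_h B _ bi_le_bj).
  rewrite (compA _ phi_j (vh B _)) -phi_h -!compA.
  rewrite (compA _ _ (fmap T psi_i)) -fmap_comp psi_phi_i fmap_id comp1m.
  rewrite (vh_g A (ai_le a3)) (vg_h A _ H23); by_bool_irrelevance.
- rewrite !fmap_comp -!compA (vg_h B _ (bi_le H23)); by_bool_irrelevance.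
- rewrite compA (vg_h B _ (le_bj H23)); by_bool_irrelevance.
- exact: vg_h.
Qed.

Definition glue_diag : diag T le :=
  Diag glue_g_id glue_g_comp glue_h_g glue_g_h.
End Object.

Section Morphism.
Variables (A A' : NCob T dA) (B B' : NCob T dB)
  (phi_i : hom (vx A ai) (vx B bi)) (psi_i : hom (vx B bi) (vx A ai))
  (phi_j : hom (vx A aj) (vx B bj))
  (phi_i' : hom (vx A' ai) (vx B' bi)) (psi_i' : hom (vx B' bi) (vx A' ai))
  (phi_j' : hom (vx A' aj) (vx B' bj)).
Hypotheses (phi_psi_i : compm phi_i psi_i = idm _)
  (psi_phi_i' : compm psi_i' phi_i' = idm _).
Variables (u : NChom A A') (v : NChom B B').
Hypotheses (u_v_i : compm (hu v bi) phi_i = compm phi_i' (hu u ai))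
  (u_v_j : compm (hu v bj) phi_j = compm phi_j' (hu u aj)).

Definition glue_map (r : glue_index dA dB) : hom (glue_ob A B r) (glue_ob A' B' r) :=
  match r with InA a => hu u a | InB b => hu v b end.

Lemma u_v_inv_i : compm (hu u ai) psi_i = compm psi_i' (hu v bi).
Proof. exact: inverse_square phi_psi_i psi_phi_i' u_v_i. Qed.

Lemma glue_map_g r r' (H : le r r') :
  compm (glue_map r') (glue_g psi_i phi_j H) = compm (glue_g psi_i' phi_j' H) (glue_map r).
Proof.
case: r r' H => [a|b] [a'|b'] /= H.
- exact: hu_g.
- rewrite !compA (hu_g v) -!compA (compA _ phi_j (hu v bj)) u_v_j -!compA (hu_g u).
  by rewrite -?compA.
- rewrite !compA (hu_g u) -!compA (compA _ psi_i (hu u ai)) u_v_inv_i -!compA (hu_g v).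
  by rewrite -?compA.
- exact: hu_g.
Qed.

Lemma glue_map_h r r' (H : le r r') :
  compm (fmap T (glue_map r)) (glue_h psi_i phi_j H) =
  compm (glue_h psi_i' phi_j' H) (glue_map r').
Proof.
case: r r' H => [a|b] [a'|b'] /= H.
- exact: hu_h.
- rewrite -!compA -(hu_h v) (compA _ _ (fmap T psi_i')) -fmap_comp -u_v_inv_i.
  rewrite fmap_comp -!compA (compA _ (fmap T (hu u ai)) (fmap T (vg A' _))).
  by rewrite -fmap_comp -(hu_g u) fmap_comp -?compA.
- rewrite (compA _ _ (fmap T _)) (hu_h v) -!compA (compA _ _ (hu v bj)) u_v_j -!compA.
  by rewrite (hu_g u) -?compA.
- exact: hu_h.
Qed.
End Morphism.
End Gluing.

Definition v0 : 'I_2 := ord0.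
Definition v1 : 'I_2 := ord_max.

Lemma ord2_cases (t : 'I_2) : t = v0 \/ t = v1.
Proof. by case: t => [[|[|?]]] // ?; [left|right]; apply: val_inj. Qed.

Section SegalEquivalence.
Variables (C : Category) (T : Functor C C) (n i j : nat) (Hij : i < j) (Hjn : j <= n).

Local Notation dA := (j - i).
Local Notation dB := (n - (j - i)).+1.
Local Notation le := (@glue_le dA dB i).
Local Notation PB := (Pullback (res T (mono_gaI i j)) (res T (mono_gaJ Hij Hjn))).
Local Notation F := (segal_map Hij Hjn T).

Definition Ii := gaI i j v0.
Definition Ij := gaI i j v1.
Definition Ji := gaJ n i j v0.
Definition Jj := gaJ n i j v1.

Lemma val_Ii : nat_of_ord Ii = 0.
Proof. by rewrite /Ii /gaI /= mul0n inord_val. Qed.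
Lemma val_Ij : nat_of_ord Ij = dA.
Proof. by rewrite /Ij /gaI /= mul1n inord_val. Qed.
Lemma val_Ji : nat_of_ord Ji = i.
Proof. by rewrite /Ji /gaJ /= inord_val; lia. Qed.
Lemma val_Jj : nat_of_ord Jj = i.+1.
Proof. by rewrite /Jj /gaJ /= inord_val; lia. Qed.

Lemma val_alI (t : 'I_dA.+1) : nat_of_ord (alI n t) = i + t.
Proof. by have ht := ltn_ord t; rewrite /alI inord_val //; lia. Qed.

Lemma val_alJ (b : 'I_dB.+1) :
  nat_of_ord (alJ b) = if b <= i then nat_of_ord b else b + (j - i) - 1.
Proof.
by have hb := ltn_ord b; rewrite /alJ; case: (leqP b i) => h; rewrite inord_val //; lia.
Qed.

Definition segal_reg (s : 'I_n.+1) : glue_index dA dB :=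
  if s <= i then InB (inord s) else if s <= j then InA (inord (s - i))
  else InB (inord (s - (j - i) + 1)).

Lemma mono_segal_reg (s t : 'I_n.+1) : s <= t -> le (segal_reg s) (segal_reg t).
Proof.
move=> H; have := ltn_ord s; have := ltn_ord t; rewrite /segal_reg => hs ht.
by case: (leqP s i) => h1; case: (leqP s j) => h2; case: (leqP t i) => h3;
  case: (leqP t j) => h4 /=; rewrite ?inord_val; lia.
Qed.

Definition segal_idx (r : glue_index dA dB) : 'I_n.+1 :=
  match r with InA a => alI n a | InB b => alJ b end.

Lemma segal_idx_reg (t : 'I_n.+1) : nat_of_ord (segal_idx (segal_reg t)) = t.
Proof.
have ht := ltn_ord t; rewrite /segal_reg.
case: (leqP t i) => h1 /=; first by rewrite val_alJ inord_val ?h1 //; lia.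
case: (leqP t j) => h2 /=; first by rewrite val_alI inord_val; lia.
rewrite val_alJ inord_val; last by lia.
have -> : (t - (j - i) + 1 <= i) = false by lia.
lia.
Qed.

Lemma segal_reg_alI_le (t : 'I_dA.+1) : le (segal_reg (alI n t)) (InA t).
Proof.
have := ltn_ord t; rewrite /segal_reg val_alI => ht.
by case: (leqP (i + t) i) => h1; case: (leqP (i + t) j) => h2 /=; rewrite ?inord_val; lia.
Qed.

Lemma segal_reg_alJ_le (t : 'I_dB.+1) : le (segal_reg (alJ t)) (InB t).
Proof.
have := ltn_ord t; rewrite /segal_reg val_alJ => ht.
case: (leqP t i) => h0 /=; first by rewrite h0 /= inord_val; lia.
by case: (leqP (t + (j - i) - 1) i) => h1; case: (leqP (t + (j - i) - 1) j) => h2 /=;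
  rewrite ?inord_val; lia.
Qed.

(* A vertex of I is sent to its own copy, except i, which goes to its copy in J;
   dually for J and the vertex j. *)
Lemma segal_reg_alI (t : 'I_dA.+1) :
  match segal_reg (alI n t) with
  | InA a => nat_of_ord a = t | InB b => nat_of_ord b = i /\ nat_of_ord t = 0 end.
Proof.
have := ltn_ord t; rewrite /segal_reg val_alI => ht.
by case: (leqP (i + t) i) => h1; case: (leqP (i + t) j) => h2 /=; rewrite ?inord_val; lia.
Qed.

Lemma segal_reg_alJ (t : 'I_dB.+1) :
  match segal_reg (alJ t) with
  | InA a => nat_of_ord a = dA /\ nat_of_ord t = i.+1 | InB b => nat_of_ord b = t end.
Proof.
have := ltn_ord t; rewrite /segal_reg val_alJ => ht.
case: (leqP t i) => h0 /=; first by rewrite h0 /= inord_val; lia.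
by case: (leqP (t + (j - i) - 1) i) => h1; case: (leqP (t + (j - i) - 1) j) => h2 /=;
  rewrite ?inord_val; lia.
Qed.

Lemma val_alI_Ii : nat_of_ord (alI n Ii) = i.
Proof. by rewrite val_alI val_Ii addn0. Qed.
Lemma val_alI_Ij : nat_of_ord (alI n Ij) = j.
Proof. by rewrite val_alI val_Ij; lia. Qed.
Lemma val_alJ_Jj : nat_of_ord (alJ Jj) = j.
Proof. by rewrite val_alJ val_Jj ltnn; lia. Qed.

Lemma segal_reg_i :
  match segal_reg (alI n Ii) with InB b => nat_of_ord b = i | InA _ => False end.
Proof. by rewrite /segal_reg val_alI_Ii leqnn /= inord_val //; lia. Qed.

Lemma segal_reg_j :
  match segal_reg (alI n Ij) with InA a => nat_of_ord a = dA | InB _ => False end.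
Proof. by rewrite /segal_reg val_alI_Ij leqNgt Hij /= leqnn /= inord_val //; lia. Qed.

Section InverseObject.
Variable x : PB.

Definition pb_phi_i : hom (vx (pb_a x) Ii) (vx (pb_c x) Ji) := hu (pb_phi x) v0.
Definition pb_phi_j : hom (vx (pb_a x) Ij) (vx (pb_c x) Jj) := hu (pb_phi x) v1.
Definition pb_psi_i : hom (vx (pb_c x) Ji) (vx (pb_a x) Ii) :=
  iso_inv (hu_iso (pb_phi x) v0).

Lemma pb_psi_i_iso : is_iso pb_psi_i.
Proof. exact: iso_inv_iso. Qed.

Lemma pb_phi_psi_i : compm pb_phi_i pb_psi_i = idm _.
Proof. exact: iso_invR. Qed.

Lemma pb_psi_phi_i : compm pb_psi_i pb_phi_i = idm _.
Proof. exact: iso_invL. Qed.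

Lemma pb_phi_g (H1 : Ii <= Ij) :
  compm pb_phi_j (vg (pb_a x) H1) = compm (vg (pb_c x) (bi_le_bj val_Ji val_Jj)) pb_phi_i.
Proof.
rewrite (bool_irrelevance H1 (mono_gaI i j (isT : v0 <= v1))).
rewrite (bool_irrelevance (bi_le_bj _ _) (mono_gaJ Hij Hjn (isT : v0 <= v1))).
exact: (hu_g (pb_phi x) (isT : v0 <= v1)).
Qed.

Lemma pb_phi_h :
  compm (fmap T pb_phi_i) (vh (pb_a x) (ai_le_aj Ij val_Ii)) =
  compm (vh (pb_c x) (bi_le_bj val_Ji val_Jj)) pb_phi_j.
Proof.
rewrite (bool_irrelevance (ai_le_aj _ _) (mono_gaI i j (isT : v0 <= v1))).
rewrite (bool_irrelevance (bi_le_bj _ _) (mono_gaJ Hij Hjn (isT : v0 <= v1))).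
exact: (hu_h (pb_phi x) (isT : v0 <= v1)).
Qed.

Definition segal_diag : diag T le :=
  glue_diag (Hai := val_Ii) val_Ij (Hbi := val_Ji) (Hbj := val_Jj) pb_phi_psi_i pb_psi_phi_i
    pb_phi_g pb_phi_h.

Definition segal_inv_ob : NCob T n := diag_res mono_segal_reg segal_diag.
End InverseObject.

Section InverseMorphism.
Variables (x y : PB) (f : hom x y).

Lemma pb_hom_i : compm (hu (pb_v f) Ji) (pb_phi_i x) = compm (pb_phi_i y) (hu (pb_u f) Ii).
Proof. exact: (congr1 (fun g : NChom _ _ => hu g v0) (pb_sq f)). Qed.

Lemma pb_hom_j : compm (hu (pb_v f) Jj) (pb_phi_j x) = compm (pb_phi_j y) (hu (pb_u f) Ij).
Proof. exact: (congr1 (fun g : NChom _ _ => hu g v1) (pb_sq f)). Qed.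

Definition segal_glue_map := glue_map (pb_u f) (pb_v f).

Lemma segal_glue_map_g r r' (H : le r r') :
  compm (segal_glue_map r') (dg (segal_diag x) H) =
  compm (dg (segal_diag y) H) (segal_glue_map r).
Proof. exact: (glue_map_g _ _ _ _ (pb_phi_psi_i x) (pb_psi_phi_i y) pb_hom_i pb_hom_j). Qed.

Lemma segal_glue_map_h r r' (H : le r r') :
  compm (fmap T (segal_glue_map r)) (dh (segal_diag x) H) =
  compm (dh (segal_diag y) H) (segal_glue_map r').
Proof. exact: (glue_map_h _ _ _ _ (pb_phi_psi_i x) (pb_psi_phi_i y) pb_hom_i pb_hom_j). Qed.

Definition segal_inv_hom : NChom (segal_inv_ob x) (segal_inv_ob y).
Proof.
refine (@diag_res_hom C T _ le n segal_reg mono_segal_reg (segal_diag x) (segal_diag y)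
          segal_glue_map _
          segal_glue_map_g segal_glue_map_h).
by case=> [a|b]; exact: hu_iso.
Defined.
End InverseMorphism.

Definition segal_inv : Functor PB (NC T n).
Proof.
refine (@Fun PB (NC T n) segal_inv_ob segal_inv_hom _ _).
- by move=> x; apply: NChom_ext => t /=; case: (segal_reg t).
- by move=> x y z f g; apply: NChom_ext => t /=; case: (segal_reg t).
Defined.

Arguments segal_diag : simpl never.

Section Counit.
Variable x : PB.

Lemma segal_diag_isoA (t : 'I_dA.+1) r (H : le r (InA t)) :
  match r with
  | InA a => nat_of_ord a = t | InB b => nat_of_ord b = i /\ nat_of_ord t = 0 end ->
  is_iso (dg (segal_diag x) H).
Proof.
rewrite /segal_diag; case: r H => [a|b] /= H E; first exact: vg_iso.
case: E => E1 E2; apply: iso_comp; first apply: iso_comp.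
- by apply: vg_iso; rewrite val_Ji.
- exact: pb_psi_i_iso.
- by apply: vg_iso; rewrite val_Ii.
Qed.

Lemma segal_diag_isoB (t : 'I_dB.+1) r (H : le r (InB t)) :
  match r with
  | InA a => nat_of_ord a = dA /\ nat_of_ord t = i.+1 | InB b => nat_of_ord b = t end ->
  is_iso (dg (segal_diag x) H).
Proof.
rewrite /segal_diag; case: r H => [a|b] /= H E; last exact: vg_iso.
case: E => E1 E2; apply: iso_comp; first apply: iso_comp.
- by apply: vg_iso; rewrite val_Ij.
- exact: (hu_iso (pb_phi x) v1).
- by apply: vg_iso; rewrite val_Jj.
Qed.

Definition segal_counit_I : NChom (res T (mono_alI Hij Hjn) (segal_inv_ob x)) (pb_a x).
Proof.
refine (@NCHom C T dA (res T (mono_alI Hij Hjn) (segal_inv_ob x)) (pb_a x)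
          (fun t => dg (segal_diag x) (segal_reg_alI_le t))
          (fun t => segal_diag_isoA (segal_reg_alI_le t) (segal_reg_alI t)) _ _).
- by move=> s t H; exact: (dg_square (@glue_le_trans dA dB i) (segal_diag x)
    (r1 := segal_reg (alI n s)) (r2 := segal_reg (alI n t)) (s1 := InA s) (s2 := InA t)).
- by move=> s t H; exact: (dh_square (@glue_le_trans dA dB i) (segal_diag x)
    (r1 := segal_reg (alI n s)) (r2 := segal_reg (alI n t)) (s1 := InA s) (s2 := InA t)).
Defined.

Definition segal_counit_J : NChom (res T (mono_alJ Hij Hjn) (segal_inv_ob x)) (pb_c x).
Proof.
refine (@NCHom C T dB (res T (mono_alJ Hij Hjn) (segal_inv_ob x)) (pb_c x)
          (fun t => dg (segal_diag x) (segal_reg_alJ_le t))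
          (fun t => segal_diag_isoB (segal_reg_alJ_le t) (segal_reg_alJ t)) _ _).
- by move=> s t H; exact: (dg_square (@glue_le_trans dA dB i) (segal_diag x)
    (r1 := segal_reg (alJ s)) (r2 := segal_reg (alJ t)) (s1 := InB s) (s2 := InB t)).
- by move=> s t H; exact: (dh_square (@glue_le_trans dA dB i) (segal_diag x)
    (r1 := segal_reg (alJ s)) (r2 := segal_reg (alJ t)) (s1 := InB s) (s2 := InB t)).
Defined.

Lemma segal_diag_g_i r (K : le r (InB Ji)) (K' : le r (InA Ii)) :
  match r with InB b => nat_of_ord b = i | InA _ => False end ->
  dg (segal_diag x) K = compm (pb_phi_i x) (dg (segal_diag x) K').
Proof.
rewrite /segal_diag; case: r K K' => [a|b] //= K K' E.
rewrite vg_id comp1m compA pb_phi_psi_i comp1m; exact: vg_irrelevance.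
Qed.

Lemma segal_diag_g_j r (K : le r (InB Jj)) (K' : le r (InA Ij)) :
  match r with InA a => nat_of_ord a = dA | InB _ => False end ->
  dg (segal_diag x) K = compm (pb_phi_j x) (dg (segal_diag x) K').
Proof.
rewrite /segal_diag; case: r K K' => [a|b] //= K K' E.
by rewrite vg_id comp1m (vg_irrelevance _ K' (le_aj val_Ij a)).
Qed.

Definition segal_counit : hom (F (segal_inv x)) x.
Proof.
refine (@PbHom _ _ _ _ _ (F (segal_inv x)) x segal_counit_I segal_counit_J _).
apply: NChom_ext => t /=.
have K : le (segal_reg (alI n (gaI i j t))) (InB (gaJ n i j t)).
  by rewrite (segal_sq_eq Hij Hjn t); exact: segal_reg_alJ_le.
rewrite (diag_res_eqhom mono_segal_reg (segal_diag x) _ _ K).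
case: (ord2_cases t) => E; subst t.
- exact: (segal_diag_g_i K (segal_reg_alI_le _) segal_reg_i).
- exact: (segal_diag_g_j K (segal_reg_alI_le _) segal_reg_j).
Defined.
End Counit.

Section Unit.
Variable X : NC T n.

Lemma pb_psi_i_segal_map : pb_psi_i (F X) = eqhom (vx X) (esym (segal_sq_eq Hij Hjn v0)).
Proof. by apply: iso_inv_unique; exact: (eqhomK (vx X) (segal_sq_eq Hij Hjn v0)). Qed.

Definition segal_unit_at (r : glue_index dA dB) (s : 'I_n.+1) :
  s <= segal_idx r -> hom (vx X s) (dob (segal_diag (F X)) r) :=
  match r return s <= segal_idx r -> hom (vx X s) (dob (segal_diag (F X)) r) with
  | InA a => fun H => vg X H
  | InB b => fun H => vg X H
  end.

Lemma segal_unit_at_iso r (s : 'I_n.+1) (H : s <= segal_idx r) :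
  nat_of_ord (segal_idx r) = s -> is_iso (segal_unit_at H).
Proof. by case: r H => [a|b] /= H E; apply: vg_iso. Qed.

Lemma segal_unit_at_vg r (s t : 'I_n.+1) (H : s <= t) (Ht : t <= segal_idx r)
    (Hs : s <= segal_idx r) :
  compm (segal_unit_at Ht) (vg X H) = segal_unit_at Hs.
Proof. by case: r Ht Hs => [a|b] /= Ht Hs; exact: vg_comp. Qed.

Lemma segal_unit_at_g r r' (K : le r r') (s : 'I_n.+1) (Hs : s <= segal_idx r)
    (Hs' : s <= segal_idx r') :
  compm (dg (segal_diag (F X)) K) (segal_unit_at Hs) = segal_unit_at Hs'.
Proof.
rewrite /segal_diag; case: r r' K Hs Hs' => [a|b] [a'|b'] /= K Hs Hs'.
- exact: vg_comp.
- rewrite -!compA vg_trans.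
  have h : s <= alJ Jj by move: Hs; rewrite val_alI val_alJ_Jj; have := ltn_ord a; lia.
  by rewrite (eqhom_vgE X _ _ h) vg_trans; exact: vg_irrelevance.
- rewrite pb_psi_i_segal_map -!compA vg_trans.
  have h : s <= alI n Ii by rewrite val_alI_Ii; move: Hs; rewrite val_alJ K; lia.
  by rewrite (eqhom_vgE X _ _ h) vg_trans; exact: vg_irrelevance.
- exact: vg_comp.
Qed.

Lemma segal_unit_at_h r r' (K : le r r') (s t : 'I_n.+1) (H : s <= t)
    (Hs : s <= segal_idx r) (Ht : t <= segal_idx r') :
  nat_of_ord (segal_idx r) = s -> nat_of_ord (segal_idx r') = t ->
  compm (fmap T (segal_unit_at Hs)) (vh X H) =
  compm (dh (segal_diag (F X)) K) (segal_unit_at Ht).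
Proof.
rewrite /segal_diag; case: r r' K Hs Ht => [a|b] [a'|b'] /= K Hs Ht Er Er'.
- have h : alI n a <= t by rewrite Er.
  by rewrite (vg_h X _ h) (vh_g X h); exact: vh_irrelevance.
- have h : alI n a <= t by rewrite Er.
  have h' : alI n Ii <= alJ b'.
    by rewrite val_alI_Ii val_alJ; move: K; case: ifP => _; lia.
  have h'' : alI n Ii <= t.
    by rewrite val_alI_Ii -Er' val_alJ; move: K; case: ifP => _; lia.
  rewrite (vg_h X _ h) pb_psi_i_segal_map (eqhom_vhE X _ _ h') -!compA.
  by rewrite (vh_g X h'') (vg_h X _ h); exact: vh_irrelevance.
- have h : alJ b <= t by rewrite Er.
  have h' : t <= alJ Jj by rewrite -Er' val_alI val_alJ_Jj; have := ltn_ord a'; lia.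
  rewrite (vg_h X _ h) -!compA vg_trans (eqhom_vgE X _ _ h') (vh_g X h).
  exact: vh_irrelevance.
- have h : alJ b <= t by rewrite Er.
  by rewrite (vg_h X _ h) (vh_g X h); exact: vh_irrelevance.
Qed.

Lemma le_segal_idx_reg (t : 'I_n.+1) : t <= segal_idx (segal_reg t).
Proof. by rewrite segal_idx_reg. Qed.

Definition segal_unit : NChom X (segal_inv_ob (F X)).
Proof.
refine (@NCHom C T n X (segal_inv_ob (F X)) (fun t => segal_unit_at (le_segal_idx_reg t))
          (fun t => segal_unit_at_iso (le_segal_idx_reg t) (segal_idx_reg t)) _ _).
- move=> s t H.
  have Hst : s <= segal_idx (segal_reg t) by rewrite segal_idx_reg.
  rewrite (segal_unit_at_vg H (le_segal_idx_reg t) Hst).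
  exact: (esym (segal_unit_at_g (mono_segal_reg H) (le_segal_idx_reg s) Hst)).
- move=> s t H.
  exact: (segal_unit_at_h (mono_segal_reg H) H (le_segal_idx_reg s)
            (le_segal_idx_reg t) (segal_idx_reg s) (segal_idx_reg t)).
Defined.
End Unit.

Lemma segal_unit_at_natural (X Y : NC T n) (f : NChom X Y) r (s : 'I_n.+1)
    (H : s <= segal_idx r) :
  compm (segal_unit_at Y H) (hu f s) =
  compm (segal_glue_map (fmap F f) r) (segal_unit_at X H).
Proof. by case: r H => [a|b] H /=; rewrite (hu_g f). Qed.

Lemma segal_map_equivalence : is_equivalence F.
Proof.
exists segal_inv, segal_unit, segal_counit; split.
- by move=> a; exact: NC_hom_iso.
- by move=> b; exact: pb_NC_hom_iso.
- by move=> a a' f; apply: NChom_ext => t /=; exact: segal_unit_at_natural.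
- move=> b b' g; apply: pb_hom_ext => /=; apply: NChom_ext => t /=.
  + exact: (segal_glue_map_g g (segal_reg_alI_le t)).
  + exact: (segal_glue_map_g g (segal_reg_alJ_le t)).
Qed.
End SegalEquivalence.

Section UnitEquivalence.
Variables (C : Category) (T : Functor C C) (m i : nat) (Him : i <= m).

Local Notation PB := (Pullback (res T mono_gaV) (res T (mono_gaS Him))).
Local Notation F := (unit_map Him T).

(* The coface [m] -> [m+1] omitting i+1; it is a section of alS. *)
Definition coface (t : 'I_m.+1) : 'I_m.+2 := inord (if t <= i then nat_of_ord t else t.+1).

Lemma val_coface t : nat_of_ord (coface t) = if t <= i then nat_of_ord t else t.+1.
Proof. by have ht := ltn_ord t; rewrite /coface inord_val //; case: ifP; lia. Qed.

Lemma mono_coface : mono_ord coface.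
Proof. by move=> a b ab; rewrite !val_coface; case: ifP; case: ifP; lia. Qed.

Lemma val_alS (t : 'I_m.+2) : nat_of_ord (alS i t) = if t <= i then nat_of_ord t else t.-1.
Proof.
rewrite /alS inord_val //.
by move: (nat_of_ord t) (ltn_ord t) => [|k] hk /=; repeat case: ifP; lia.
Qed.

Lemma val_alS_coface (t : 'I_m.+1) : nat_of_ord (alS i (coface t)) = t.
Proof.
rewrite val_alS val_coface.
by move: (nat_of_ord t) (ltn_ord t) => [|k] hk /=; repeat case: ifP => /=; lia.
Qed.

Lemma le_alS_coface (t : 'I_m.+1) : t <= alS i (coface t).
Proof. by rewrite val_alS_coface. Qed.

Lemma coface_alS_cases (t : 'I_m.+2) :
  nat_of_ord (coface (alS i t)) = t \/
  nat_of_ord (coface (alS i t)) = i /\ nat_of_ord t = i.+1.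
Proof.
rewrite val_coface val_alS.
by move: (nat_of_ord t) (ltn_ord t) => [|k] hk /=; repeat case: ifP => /=; lia.
Qed.

Lemma coface_alS_le (t : 'I_m.+2) : coface (alS i t) <= t.
Proof. by case: (coface_alS_cases t) => [->|[-> ->]]. Qed.

Definition Si := gaS m i v0.
Definition Si1 := gaS m i v1.

Lemma val_Si : nat_of_ord Si = i.
Proof. by rewrite /Si /gaS /= inord_val; lia. Qed.
Lemma val_Si1 : nat_of_ord Si1 = i.+1.
Proof. by rewrite /Si1 /gaS /= inord_val; lia. Qed.
Lemma Si_le_Si1 : Si <= Si1.
Proof. by rewrite val_Si val_Si1. Qed.

Lemma val_coface_alV (t : 'I_1) : nat_of_ord (coface (alV m i t)) = i.
Proof. by rewrite val_coface /alV inord_val // leqnn. Qed.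

Lemma coface_alV_le (t : 'I_1) : coface (alV m i t) <= Si.
Proof. by rewrite val_coface_alV val_Si. Qed.

Lemma ord1_val (t : 'I_1) : nat_of_ord t = 0.
Proof. by case: t => [[|]]. Qed.

Section InverseObject.
Variable x : PB.
Local Notation A := (pb_a x).
Local Notation B := (pb_c x).

Definition unit_phi_i : hom (vx A ord0) (vx B Si) := hu (pb_phi x) v0.
Definition unit_phi_i1 : hom (vx A ord0) (vx B Si1) := hu (pb_phi x) v1.
Definition unit_psi_i : hom (vx B Si) (vx A ord0) := iso_inv (hu_iso (pb_phi x) v0).

Lemma unit_phi_psi_i : compm unit_phi_i unit_psi_i = idm _.
Proof. exact: iso_invR. Qed.

Lemma unit_psi_phi_i : compm unit_psi_i unit_phi_i = idm _.
Proof. exact: iso_invL. Qed.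

Lemma unit_psi_i_iso : is_iso unit_psi_i.
Proof. exact: iso_inv_iso. Qed.

Lemma unit_phi_i1E : unit_phi_i1 = compm (vg B Si_le_Si1) unit_phi_i.
Proof.
rewrite /unit_phi_i1 /unit_phi_i.
have := hu_g (pb_phi x) (isT : v0 <= v1); rewrite /= vg_id compm1 => ->.
by congr (compm _ _); exact: vg_irrelevance.
Qed.

Lemma unit_psi_i_h (K : Si <= Si) (K' : @nat_of_ord 1 ord0 <= ord0) :
  compm (fmap T unit_psi_i) (vh B K) = compm (vh A K') unit_psi_i.
Proof.
have E := hu_h (pb_phi x) (isT : v0 <= v0).
transitivity (compm (fmap T unit_psi_i) (compm (compm (vh B K) unit_phi_i) unit_psi_i)).
  by rewrite -compA unit_phi_psi_i compm1.
rewrite (vh_irrelevance B K (mono_gaS Him (isT : v0 <= v0))).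
rewrite -[compm (vh B _) unit_phi_i]E !compA -fmap_comp unit_psi_phi_i fmap_id comp1m.
by congr (compm _ _); exact: vh_irrelevance.
Qed.

(* The edge i -> i+1 of B is isomorphic to the degenerate edge of A. *)
Lemma vg_Si_Si1_iso : is_iso (vg B Si_le_Si1).
Proof.
have -> : vg B Si_le_Si1 = compm unit_phi_i1 unit_psi_i.
  by rewrite unit_phi_i1E -compA unit_phi_psi_i compm1.
by apply: iso_comp; [exact: unit_psi_i_iso | exact: (hu_iso (pb_phi x) v1)].
Qed.

Lemma vg_coface_alS_iso (t : 'I_m.+2) : is_iso (vg B (coface_alS_le t)).
Proof.
case: (coface_alS_cases t) => [E|[E1 E2]]; first exact: vg_iso.
have h1 : coface (alS i t) <= Si by rewrite E1 val_Si.
have h2 : Si1 <= t by rewrite E2 val_Si1.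
rewrite -(vg_comp B (leq_trans h1 Si_le_Si1) h2) -(vg_comp B h1 Si_le_Si1).
apply: iso_comp; first apply: iso_comp.
- by apply: vg_iso; rewrite E1 val_Si.
- exact: vg_Si_Si1_iso.
- by apply: vg_iso; rewrite E2 val_Si1.
Qed.

Definition unit_counit_at (t : 'I_1) : hom (vx B (coface (alV m i t))) (vx A t) :=
  compm (vg A (leq0n t : @nat_of_ord 1 ord0 <= t))
    (compm unit_psi_i (vg B (coface_alV_le t))).

Lemma unit_counit_at_h (s t : 'I_1) (H : s <= t) :
  compm (fmap T (unit_counit_at s)) (vh B (mono_coface (mono_alV m i H))) =
  compm (vh A H) (unit_counit_at t).
Proof.
rewrite /unit_counit_at.
have hs : s <= @ord0 0 by rewrite ord1_val.
have h : Si <= coface (alV m i s) by rewrite val_coface_alV val_Si.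
rewrite !fmap_comp -!compA (vg_h B _ h) -(vh_g B h (coface_alV_le s) (leqnn Si)).
rewrite (compA _ _ (fmap T unit_psi_i)) (unit_psi_i_h _ (leqnn 0)) -!compA.
rewrite (compA _ (vh A _) (fmap T _)) (vg_h A _ hs) [RHS]compA (vh_g A hs) -?compA.
by congr (compm _ (compm _ _)); exact: vg_irrelevance.
Qed.

Definition unit_counit_A : NChom (res T (mono_alV m i) (res T mono_coface B)) A.
Proof.
refine (@NCHom C T 0 (res T (mono_alV m i) (res T mono_coface B)) A unit_counit_at
          _ _ unit_counit_at_h).
- move=> t; rewrite /unit_counit_at; apply: iso_comp; first apply: iso_comp.
  + by apply: vg_iso; rewrite val_coface_alV val_Si.
  + exact: unit_psi_i_iso.
  + by apply: vg_iso; rewrite (ord1_val t).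
- move=> s t H; rewrite /unit_counit_at /= vg_id compm1 !compA (vg_comp A).
  by congr (compm (compm _ _) _); exact: vg_irrelevance.
Defined.

Definition unit_counit_B : NChom (res T (mono_alS Him) (res T mono_coface B)) B.
Proof.
refine (@NCHom C T m.+1 (res T (mono_alS Him) (res T mono_coface B)) B
          (fun t => vg B (coface_alS_le t)) vg_coface_alS_iso _ _).
- by move=> s t H /=; rewrite !vg_trans; exact: vg_irrelevance.
- move=> s t H /=.
  rewrite -(vh_g B _ (coface_alS_le t) (leq_trans (coface_alS_le s) H)).
  by rewrite compA (vg_h B _ H).
Defined.
End InverseObject.

Lemma coface_eqhom (B : NCob T m.+1) (a b : 'I_m.+1) (e : a = b) (c : 'I_m.+2)
    (K : coface b <= c) (K' : coface a <= c) :
  compm (vg B K) (eqhom (vx (res T mono_coface B)) e) = vg B K'.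
Proof. by case: b / e K => K; rewrite /= compm1; exact: vg_irrelevance. Qed.

Definition unit_inv : Functor PB (NC T m).
Proof.
refine (@Fun PB (NC T m) (fun x => res T mono_coface (pb_c x))
          (fun x y f => fmap (res T mono_coface) (pb_v f)) _ _).
- by move=> x; exact: (fmap_id (res T mono_coface) (pb_c x)).
- by move=> x y z f g; exact: (fmap_comp (res T mono_coface) (pb_v f) (pb_v g)).
Defined.

Definition unit_counit (x : PB) : hom (F (unit_inv x)) x.
Proof.
refine (@PbHom _ _ _ _ _ (F (unit_inv x)) x (unit_counit_A x) (unit_counit_B x) _).
apply: NChom_ext => t /=.
have K : coface (alV m i (gaV t)) <= gaS m i t.
  by have ht := ltn_ord t; rewrite val_coface_alV /gaS inord_val; lia.
rewrite (coface_eqhom _ _ _ K) /unit_counit_at vg_id comp1m.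
case: (ord2_cases t) => E; subst t.
- rewrite compA.
  change (hu (pb_phi x) v0) with (unit_phi_i x); rewrite unit_phi_psi_i comp1m.
  exact: vg_irrelevance.
- change (hu (pb_phi x) v1) with (unit_phi_i1 x).
  rewrite unit_phi_i1E -compA (compA _ _ (unit_phi_i x)) unit_phi_psi_i comp1m.
  by rewrite (vg_comp (pb_c x) (coface_alV_le ord0) Si_le_Si1 K).
Defined.

Definition unit_unit (X : NC T m) : NChom X (res T mono_coface (res T (mono_alS Him) X)).
Proof.
refine (@NCHom C T m X (res T mono_coface (res T (mono_alS Him) X))
          (fun t => vg X (le_alS_coface t)) _ _ _).
- by move=> t; apply: vg_iso; rewrite val_alS_coface.
- by move=> s t H /=; rewrite !vg_trans; exact: vg_irrelevance.
- move=> s t H /=.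
  have h : alS i (coface s) <= t by rewrite val_alS_coface.
  by rewrite (vg_h X _ h) (vh_g X h); exact: vh_irrelevance.
Defined.

Lemma unit_counit_at_natural (x y : PB) (f : hom x y) (t : 'I_1) :
  compm (hu (pb_u f) t) (unit_counit_at x t) =
  compm (unit_counit_at y t) (hu (pb_v f) (coface (alV m i t))).
Proof.
have psi_nat : compm (hu (pb_u f) ord0) (unit_psi_i x) =
               compm (unit_psi_i y) (hu (pb_v f) Si).
  apply: inverse_square (unit_phi_psi_i x) (unit_psi_phi_i y) _.
  exact: (congr1 (fun h : NChom _ _ => hu h v0) (pb_sq f)).
rewrite /unit_counit_at !compA (hu_g (pb_u f)) -!compA (compA _ (unit_psi_i x)) psi_nat.
by rewrite -!compA (hu_g (pb_v f)) -?compA.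
Qed.

Lemma unit_map_equivalence : is_equivalence F.
Proof.
exists unit_inv, unit_unit, unit_counit; split.
- by move=> a; exact: NC_hom_iso.
- by move=> b; exact: pb_NC_hom_iso.
- by move=> a a' f; apply: NChom_ext => t /=; rewrite (hu_g f).
- move=> x y f; apply: pb_hom_ext => /=; apply: NChom_ext => t /=.
  + exact: unit_counit_at_natural.
  + exact: hu_g.
Qed.
End UnitEquivalence.

Theorem mainTheorem11 (C : Category) (T : Functor C C) : NC_is_unital_2Segal C T.
Proof.
split.
- by move=> n i j _ Hij Hjn; exact: segal_map_equivalence.
- by move=> m i _ Him; exact: unit_map_equivalence.
Qed.
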